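(* Suppose the p-values are conditionally super-uniform: for every $t$ with $\theta_t=0$, $\mathbb{P}(p_t\le u\mid\mathcal{F}_{t-1})\le u$ a.s. for all $u\in[0,1]$ (equivalently, for every $\mathcal F_{t-1}$-measurable $[0,1]$-valued $U$, $\mathbb{P}(p_t\le U\mid\mathcal{F}_{t-1})\le U$). Let $\mathrm{FDP}^*_{\mathrm{e}}(t)=\sum_{j\in\mathcal{H}_0(t)}\frac{\alpha_j}{R_{j-1}+1}$. Then for every $t\ge1$: if $\mathbb{E}[\mathrm{FDP}^*_{\mathrm{e}}(t)]\le\alpha$, then $\mathrm{FDR}(t)\le\alpha$.
   Context: Let $\alpha\in(0,1)$ be a target level. Hypotheses are indexed by $t=1,2,\dots$; $\theta_t\in\{0,1\}$ is a fixed (non-random) indicator with $\theta_t=0$ iff the $t$-th null hypothesis is true. $p_1,p_2,\dots$ are $[0,1]$-valued random variables (p-values). Testing levels $\alpha_1,\alpha_2,\dots$ are $[0,1]$-valued random variables and the decisions are $\delta_t=\mathbb{1}\{p_t\le\alpha_t\}$. Let $\mathcal{F}_t=\sigma(\delta_1,\dots,\delta_t)$, $\mathcal{F}_0$ trivial; each $\alpha_t$ is required to be $\mathcal{F}_{t-1}$-measurable. $R_t=\sum_{j=1}^t\delta_j$, $R_0=0$. $\mathcal{H}_0(t)=\{j\le t:\theta_j=0\}$. $\mathrm{FDR}(t)=\mathbb{E}\big[\sum_{j\in\mathcal{H}_0(t)}\delta_j/(R_t\vee 1)\big]$. *)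

From HB Require Import structures.
From mathcomp Require Import all_boot all_order all_algebra.
From mathcomp Require Import all_classical all_reals all_analysis.
Set Implicit Arguments. Unset Strict Implicit. Unset Printing Implicit Defensive.
Import Order.TTheory GRing.Theory Num.Theory.
Local Open Scope classical_set_scope.
Local Open Scope ring_scope.

Section OnlineFDR.
Context {d : measure_display} {T : measurableType d} {R : realType}.
Variables (theta : nat -> bool) (p a : nat -> T -> R).
(* Hypotheses indexed by t = 1,2,...; index 0 is unused.
   theta j = false  <->  the j-th null hypothesis is true (theta_j = 0). *)

Definition delta (j : nat) (x : T) : R := if p j x <= a j x then 1 else 0.

Definition Rcount (t : nat) (x : T) : R := \sum_(1 <= j < t.+1) delta j x.

Definition Vcount (t : nat) (x : T) : R :=
  \sum_(1 <= j < t.+1 | ~~ theta j) delta j x.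

Definition FDP (t : nat) (x : T) : R := Vcount t x / Num.max (Rcount t x) 1.

Definition FDPe (t : nat) (x : T) : R :=
  \sum_(1 <= j < t.+1 | ~~ theta j) a j x / (Rcount j.-1 x + 1).

(* F_t = sigma(delta_1, ..., delta_t): the sigma-algebra on T generated by
   the events {delta_j = 1} = {p_j <= alpha_j}, 1 <= j <= t (F_0 trivial). *)
Definition filt (t : nat) : set (set T) :=
  <<s [set A | exists2 j : nat, (1 <= j <= t)%N & A = [set x | p j x <= a j x]] >>.
End OnlineFDR.

Definition F_measurable {T : Type} {R : realType} (F : set (set T)) (f : T -> R) :=
  forall B : set R, measurable B -> F (f @^-1` B).

From HB Require Import structures.
From mathcomp Require Import all_boot all_order all_algebra.
From mathcomp Require Import all_classical all_reals all_analysis.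
From mathcomp Require Import measurable_realfun.
Import Order.TTheory GRing.Theory Num.Theory.
Local Open Scope classical_set_scope.
Local Open Scope ring_scope.

(* If the j-th hypothesis is rejected then R_t \/ 1 >= R_j = R_(j-1) + 1, so
   pointwise FDP(t) <= sum_(j null) delta_j / (R_(j-1) + 1).  The count R_(j-1)
   is F_(j-1)-measurable with values in {0, ..., j-1}; on its level set
   {R_(j-1) = k} the j-th term equals delta_j / (k + 1), and conditional
   super-uniformity with U = alpha_j gives
   E[delta_j; R_(j-1) = k] <= E[alpha_j; R_(j-1) = k].  Summing over k and j,
   E[FDP(t)] <= E[FDP*_e(t)] <= alpha. *)

Section finite_sums.
Context d (T : measurableType d) (R : realType).

Lemma measurable_sum_cond D (I : eqType) (s : seq I) (P : pred I)
    (h : I -> T -> R) :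
  (forall i, i \in s -> P i -> measurable_fun D (h i)) ->
  measurable_fun D (fun x => \sum_(i <- s | P i) h i x).
Proof.
move=> mh.
have -> : (fun x => \sum_(i <- s | P i) h i x) =
    (fun x => \sum_(i <- s) if (i \in s) && P i then h i x else 0).
  by apply/funext => x; rewrite big_seq_cond big_mkcond.
apply: measurable_sum => i.
by case: (boolP ((i \in s) && P i)) => [/andP[si Pi]|_];
  [exact: mh|exact: measurable_cst].
Qed.

Lemma ge0_integral_sum_cond (mu : {measure set T -> \bar R}) (I : eqType)
    (s : seq I) (P : pred I) (h : I -> T -> R) :
  (forall i, i \in s -> P i -> measurable_fun setT (h i)) ->
  (forall i x, i \in s -> P i -> 0 <= h i x) ->
  (\int[mu]_x (\sum_(i <- s | P i) h i x)%:E =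
   \sum_(i <- s | P i) \int[mu]_x (h i x)%:E)%E.
Proof.
move=> mh h0; pose h' i x := (if (i \in s) && P i then h i x else 0)%:E.
rewrite big_seq_cond big_mkcond.
under eq_integral => x _ do rewrite big_seq_cond big_mkcond -sumEFin.
rewrite (@ge0_integral_sum _ _ _ mu setT measurableT _ h') //.
- apply: eq_bigr => i _; rewrite /h'; case: ifP => // _.
  by rewrite integral0.
- move=> i; apply/measurable_EFinP; rewrite /h'.
  by case: (boolP ((i \in s) && P i)) => [/andP[si Pi]|_];
    [exact: mh|exact: measurable_cst].
- move=> i x _; rewrite /h' lee_fin.
  by case: (boolP ((i \in s) && P i)) => [/andP[si Pi]|_]; [exact: h0|].
Qed.

Lemma ge0_integralZl_restrict (mu : {measure set T -> \bar R}) (c : R)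
    (f : T -> R) (B : set T) :
  0 <= c -> measurable B -> measurable_fun setT f -> (forall x, 0 <= f x) ->
  (\int[mu]_x (c * (f x * \1_B x))%:E = c%:E * \int[mu]_(x in B) (f x)%:E)%E.
Proof.
move=> c0 mB mf f0; under eq_integral do rewrite EFinM.
rewrite ge0_integralZl_EFin //.
- congr (_ * _)%E; rewrite [RHS]integral_mkcond; apply: eq_integral => x _.
  by rewrite /patch indicE; case: (x \in B); rewrite ?mulr1 ?mulr0.
- by move=> x _; rewrite lee_fin mulr_ge0.
by apply/measurable_EFinP; apply: measurable_funM.
Qed.

End finite_sums.

Lemma comp_sum_level_indic (T : Type) (R : numDomainType) (f : T -> R)
    (g : R -> R) N x :
  (exists2 n, (n < N)%N & f x = n%:R) ->
  g (f x) = \sum_(k < N) g k%:R * \1_[set y | f y = k%:R] x.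
Proof.
move=> [n nN fx]; rewrite (bigD1 (Ordinal nN)) //= big1 ?addr0.
  by rewrite indicE mem_set ?mulr1 ?fx.
move=> k /negP kn; rewrite indicE memNset ?mulr0 //= fx => /eqP.
by rewrite eqr_nat => /eqP nk; apply: kn; apply/eqP/val_inj.
Qed.

Section online_fdr.
Context d (T : measurableType d) (R : realType).
Variables (theta : nat -> bool) (p a : nat -> T -> R).

Definition rejection (j : nat) : set T := [set x | p j x <= a j x].

Lemma deltaE j : delta p a j = \1_(rejection j).
Proof.
apply/funext => x; rewrite indicE /delta.
by case: ifPn => h; [rewrite mem_set|rewrite memNset //; apply/negP].
Qed.

Lemma delta_ge0 j x : 0 <= delta p a j x.
Proof. by rewrite deltaE. Qed.

Lemma filt_mono m n : (m <= n)%N -> filt p a m `<=` filt p a n.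
Proof.
move=> mn; apply: sub_sigma_algebra2 => A [j /andP[j1 jm] ->].
by exists j => //; rewrite j1 (leq_trans jm mn).
Qed.

Lemma filt_rejection j m : (1 <= j <= m)%N -> filt p a m (rejection j).
Proof. by move=> jm; apply: sub_sigma_algebra; exists j. Qed.

Lemma Rcount0 x : Rcount p a 0 x = 0.
Proof. by rewrite /Rcount big_geq. Qed.

Lemma RcountS m x : Rcount p a m.+1 x = Rcount p a m x + delta p a m.+1 x.
Proof. by rewrite /Rcount big_nat_recr. Qed.

Lemma Rcount_natr m x : exists2 n, (n < m.+1)%N & Rcount p a m x = n%:R.
Proof.
elim: m => [|m [n nm Rm]]; first by exists 0%N; rewrite ?Rcount0.
rewrite RcountS Rm deltaE indicE; case: (x \in _).
  by exists n.+1; rewrite ?natr1.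
by exists n; rewrite ?addr0 // ltnS ltnW.
Qed.

Lemma Rcount_ge0 m x : 0 <= Rcount p a m x.
Proof. by have [n _ ->] := Rcount_natr m x. Qed.

Lemma le_Rcount m n x : (m <= n)%N -> Rcount p a m x <= Rcount p a n x.
Proof.
elim: n => [|n IH]; first by rewrite leqn0 => /eqP ->.
rewrite leq_eqVlt => /orP[/eqP -> //|]; rewrite ltnS => /IH mn.
by rewrite RcountS (le_trans mn) // lerDl delta_ge0.
Qed.

(* [filt p a m] is the sigma-algebra [measurable] of a [g_sigma_algebraType],
   which provides its closure properties. *)
Lemma filt_Rcount_level m k : filt p a m [set x | Rcount p a m x = k].
Proof.
elim: m k => [|m IH] k.
  have [<-|k0] := eqVneq 0 k.
    rewrite (_ : [set _ | _] = setT).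
      exact: (@measurableT _ (g_sigma_algebraType _)).
    by apply/seteqP; split=> x //= _; rewrite Rcount0.
  rewrite (_ : [set _ | _] = set0).
    exact: (@measurable0 _ (g_sigma_algebraType _)).
  by apply/seteqP; split=> x //=; rewrite Rcount0 => /eqP; rewrite (negbTE k0).
have -> : [set x | Rcount p a m.+1 x = k] =
    ([set x | Rcount p a m x = k] `\` rejection m.+1) `|`
    ([set x | Rcount p a m x = k - 1] `&` rejection m.+1).
  apply/seteqP; split=> x /=; rewrite RcountS /delta.
    case: ifPn => [rej|/negP nrej] <-; first by right; rewrite addrK.
    by left; rewrite addr0.
  by case=> [[-> /negP/negbTE ->]|[-> ->]]; rewrite ?addr0 ?subrK.
have filt_m := @filt_mono _ _ (leqnSn m).
have rej : filt p a m.+1 (rejection m.+1).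
  by apply: filt_rejection; rewrite leqnn.
apply: (@measurableU _ (g_sigma_algebraType _)).
  by apply: (@measurableD _ (g_sigma_algebraType _)) => //; exact: filt_m.
by apply: (@measurableI _ (g_sigma_algebraType _)) => //; exact: filt_m.
Qed.

Lemma FDP_le_sum_delta t x : FDP theta p a t x <=
  \sum_(1 <= j < t.+1 | ~~ theta j) delta p a j x / (Rcount p a j.-1 x + 1).
Proof.
rewrite /FDP /Vcount mulr_suml big_nat_cond [leRHS]big_nat_cond.
apply: ler_sum => j /andP[/andP[j1 jt] _].
rewrite /delta; case: ifPn => rej; rewrite ?mul0r // !mul1r.
have Rj : Rcount p a j x = Rcount p a j.-1 x + 1.
  by rewrite -{1}(prednK j1) RcountS prednK // /delta rej.
rewrite -Rj lef_pV2 ?posrE ?lt_max ?ltr01 ?orbT //.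
  by rewrite le_max le_Rcount.
by rewrite Rj ltr_wpDl ?Rcount_ge0.
Qed.

Hypothesis measurable_p : forall t, measurable_fun setT (p t).
Hypothesis filt_a : forall t, (1 <= t)%N -> F_measurable (filt p a t.-1) (a t).

Lemma filt_measurable m : filt p a m `<=` measurable.
Proof.
elim: m => [|m IH];
  (apply: smallest_sub; first exact: sigma_algebra_measurable).
  by move=> A [j /andP[j1 j0]]; move: (leq_trans j1 j0).
move=> A [j /andP[j1 jm] ->].
have ma : measurable_fun setT (a j).
  move=> _ B mB; rewrite setTI; apply: IH.
  apply: (@filt_mono j.-1); last exact: filt_a.
  by rewrite -ltnS prednK.
by rewrite -(setTI [set x | p j x <= a j x]); exact: measurable_fun_le.
Qed.

Lemma measurable_a j : (1 <= j)%N -> measurable_fun setT (a j).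
Proof.
move=> j1 _ B mB; rewrite setTI.
by apply: (@filt_measurable j.-1); exact: filt_a.
Qed.

Lemma measurable_rejection j : (1 <= j)%N -> measurable (rejection j).
Proof.
by move=> j1; apply: (@filt_measurable j); apply: filt_rejection; rewrite j1 /=.
Qed.

Lemma measurable_delta j : (1 <= j)%N -> measurable_fun setT (delta p a j).
Proof.
by move=> j1; rewrite deltaE; apply/measurable_indic/measurable_rejection.
Qed.

Lemma measurable_Rcount_level m k : measurable [set x | Rcount p a m x = k].
Proof. by apply: (@filt_measurable m); exact: filt_Rcount_level. Qed.

Lemma measurable_fun_comp_Rcount (g : R -> R) m :
  measurable_fun setT (fun x => g (Rcount p a m x)).
Proof.
rewrite (_ : (fun x => _) = fun x => \sum_(k < m.+1)
    g k%:R * \1_[set y | Rcount p a m y = k%:R] x).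
  apply: measurable_sum => k; apply: measurable_funM => //.
  exact/measurable_indic/measurable_Rcount_level.
by apply/funext => x; apply/comp_sum_level_indic/Rcount_natr.
Qed.

Lemma measurable_FDP t : measurable_fun setT (FDP theta p a t).
Proof.
apply: measurable_funM.
  apply: measurable_sum_cond => j; rewrite mem_index_iota => /andP[j1 _] _.
  exact: measurable_delta.
exact: (measurable_fun_comp_Rcount (fun r => (Num.max r 1)^-1)).
Qed.

Lemma measurable_fun_div_Rcount (f : T -> R) m : measurable_fun setT f ->
  measurable_fun setT (fun x => f x / (Rcount p a m x + 1)).
Proof.
move=> mf; apply: measurable_funM => //.
exact: (measurable_fun_comp_Rcount (fun r => (r + 1)^-1)).
Qed.

Lemma integral_div_Rcount (mu : {measure set T -> \bar R}) (f : T -> R) m :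
  measurable_fun setT f -> (forall x, 0 <= f x) ->
  (\int[mu]_x (f x / (Rcount p a m x + 1))%:E =
   \sum_(k < m.+1) ((k%:R + 1)^-1)%:E *
     \int[mu]_(x in [set y | Rcount p a m y = k%:R]) (f x)%:E)%E.
Proof.
move=> mf f0.
have inv_level x : (Rcount p a m x + 1)^-1 =
    \sum_(k < m.+1) (k%:R + 1)^-1 * \1_[set y | Rcount p a m y = k%:R] x.
  exact: (@comp_sum_level_indic _ _ _ (fun r => (r + 1)^-1) _ _
    (Rcount_natr m x)).
under eq_integral do rewrite inv_level mulr_sumr -sumEFin.
rewrite ge0_integral_sum //.
- apply: eq_bigr => k _; rewrite -ge0_integralZl_restrict //.
  - by apply: eq_integral => x _; rewrite mulrCA.
  - exact: measurable_Rcount_level.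
- move=> k; apply/measurable_EFinP; apply: measurable_funM => //.
  apply: measurable_funM => //; exact/measurable_indic/measurable_Rcount_level.
- by move=> k x _; rewrite lee_fin !mulr_ge0.
Qed.

Variable P : probability T R.
Hypothesis a01 : forall t x, 0 <= a t x <= 1.
Hypothesis super_uniform : forall t, (1 <= t)%N -> ~~ theta t ->
  forall U : T -> R, F_measurable (filt p a t.-1) U ->
  (forall x, 0 <= U x <= 1) ->
  forall A, filt p a t.-1 A ->
  (P (A `&` [set x | (p t x <= U x)%R]) <= \int[P]_(x in A) (U x)%:E)%E.

Let a_ge0 j x : 0 <= a j x. Proof. by case/andP: (a01 j x). Qed.

Local Open Scope ereal_scope.

Lemma expect_delta_le_alpha j : (1 <= j)%N -> ~~ theta j ->
  \int[P]_x (delta p a j x / (Rcount p a j.-1 x + 1))%:E <=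
  \int[P]_x (a j x / (Rcount p a j.-1 x + 1))%:E.
Proof.
move=> j1 nj.
have ma : measurable_fun setT (a j) by exact: measurable_a.
have md : measurable_fun setT (delta p a j) by exact: measurable_delta.
rewrite !integral_div_Rcount // => [|x]; last exact: delta_ge0.
apply: lee_sum => k _; apply: lee_wpmul2l.
  by rewrite lee_fin invr_ge0 addr_ge0.
rewrite deltaE integral_indic;
  [|exact: measurable_Rcount_level|exact: measurable_rejection].
by rewrite setIC; apply: super_uniform => //;
  [exact: filt_a|exact: filt_Rcount_level].
Qed.

Lemma expect_FDP_le_FDPe t :
  \int[P]_x (FDP theta p a t x)%:E <= \int[P]_x (FDPe theta p a t x)%:E.
Proof.
have in_range j : j \in index_iota 1 t.+1 -> (1 <= j)%N.
  by rewrite mem_index_iota => /andP[].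
apply: (@le_trans _ _ (\int[P]_x (\sum_(1 <= j < t.+1 | ~~ theta j)
    delta p a j x / (Rcount p a j.-1 x + 1))%:E)).
  apply: ge0_le_integral => //.
  - move=> x _; rewrite lee_fin /FDP divr_ge0 ?le_max ?ler01 ?orbT //.
    by apply: sumr_ge0 => j _; exact: delta_ge0.
  - exact/measurable_EFinP/measurable_FDP.
  - apply/measurable_EFinP/measurable_sum_cond => j /in_range j1 _.
    exact/measurable_fun_div_Rcount/measurable_delta.
  - by move=> x _; rewrite lee_fin FDP_le_sum_delta.
rewrite /FDPe !ge0_integral_sum_cond; first last.
- by move=> j x _ _; rewrite divr_ge0 ?delta_ge0 ?addr_ge0 ?Rcount_ge0.
- by move=> j /in_range j1 _; exact/measurable_fun_div_Rcount/measurable_delta.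
- by move=> j x _ _; rewrite divr_ge0 ?addr_ge0 ?Rcount_ge0.
- by move=> j /in_range j1 _; exact/measurable_fun_div_Rcount/measurable_a.
rewrite big_seq_cond [leRHS]big_seq_cond.
by apply: lee_sum => j /andP[/in_range j1 nj]; exact: expect_delta_le_alpha.
Qed.

End online_fdr.

Theorem theorem3 (d : measure_display) (T : measurableType d) (R : realType)
  (P : probability T R) (alpha : R) (theta : nat -> bool) (p a : nat -> T -> R) :
  0 < alpha < 1 ->
  (forall t, measurable_fun setT (p t)) ->
  (forall t x, 0 <= p t x <= 1) ->
  (forall t x, 0 <= a t x <= 1) ->
  (forall t, (1 <= t)%N -> F_measurable (filt p a t.-1) (a t)) ->
  (forall t, (1 <= t)%N -> ~~ theta t ->
     forall U : T -> R, F_measurable (filt p a t.-1) U ->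
     (forall x, 0 <= U x <= 1) ->
     forall A, filt p a t.-1 A ->
     (P (A `&` [set x | (p t x <= U x)%R]) <= \int[P]_(x in A) (U x)%:E)%E) ->
  forall t, (1 <= t)%N ->
    (\int[P]_x (FDPe theta p a t x)%:E <= alpha%:E)%E ->
    (\int[P]_x (FDP theta p a t x)%:E <= alpha%:E)%E.
Proof.
move=> _ measurable_p _ a01 filt_a super_uniform t _.
by apply: le_trans; exact: expect_FDP_le_FDPe.
Qed.
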